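(* Let $N$ be a finite set and $F:2^N\to\mathbb{R}$. Then $F$ is quasi-submodular if and only if $F$ satisfies the single sub-crossing property.
   Context: For $A\subseteq N$, $i\in N$, write $A+i=A\cup\{i\}$. $F$ is quasi-submodular if for all $X,Y\subseteq N$ both hold: $F(X\cap Y)\ge F(X)\Rightarrow F(Y)\ge F(X\cup Y)$, and $F(X\cap Y)>F(X)\Rightarrow F(Y)>F(X\cup Y)$. $F$ satisfies the single sub-crossing property if for all $A\subseteq B\subseteq N$ and $i\in N\setminus B$ both hold: $F(A)\ge F(B)\Rightarrow F(A+i)\ge F(B+i)$, and $F(A)>F(B)\Rightarrow F(A+i)>F(B+i)$. *)

From mathcomp Require Import all_boot all_order all_algebra.
Set Implicit Arguments. Unset Strict Implicit. Unset Printing Implicit Defensive.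
Import Order.TTheory GRing.Theory Num.Theory.
Local Open Scope ring_scope.

Definition quasi_submodular (N : finType) (R : realFieldType) (F : {set N} -> R) : Prop :=
  forall X Y : {set N},
    (F X <= F (X :&: Y) -> F (X :|: Y) <= F Y) /\
    (F X < F (X :&: Y) -> F (X :|: Y) < F Y).

Definition single_sub_crossing (N : finType) (R : realFieldType) (F : {set N} -> R) : Prop :=
  forall (A B : {set N}) (i : N), A \subset B -> i \notin B ->
    (F B <= F A -> F (i |: B) <= F (i |: A)) /\
    (F B < F A -> F (i |: B) < F (i |: A)).

From mathcomp Require Import all_boot all_order all_algebra.
Set Implicit Arguments. Unset Strict Implicit. Unset Printing Implicit Defensive.
Import Order.TTheory GRing.Theory Num.Theory.
Local Open Scope ring_scope.

(* The argument works for <= and < separately, i.e. for any relation r.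
   Quasi-submodularity for the pair (B, i |: A) with A \subset B, i \notin B
   is exactly single sub-crossing; conversely, a comparison between X and
   X :&: Y propagates to X :|: S and (X :&: Y) :|: S by adding the elements
   of S = Y :\: X one at a time, and these two sets are X :|: Y and Y. *)

Section SingleCrossing.

Variables (T : finType) (R : Type) (F : {set T} -> R) (r : rel R).

Definition single_crossing_for : Prop :=
  forall (A B : {set T}) (i : T), A \subset B -> i \notin B ->
    r (F B) (F A) -> r (F (i |: B)) (F (i |: A)).

Hypothesis crossF : single_crossing_for.

Lemma crossing_setU (X Z S : {set T}) :
  Z \subset X -> [disjoint S & X] -> r (F X) (F Z) ->
  r (F (X :|: S)) (F (Z :|: S)).
Proof.
move=> sZX; elim: {S}#|S| {-2}S (erefl #|S|) => [|n IHn] S cardS disSX rXZ.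
  by move/eqP: cardS; rewrite cards_eq0 => /eqP ->; rewrite !setU0.
have [i Si] : exists i, i \in S by apply/card_gt0P; rewrite cardS.
have disS'X : [disjoint S :\ i & X].
  by apply: disjointWl disSX; apply: subD1set.
have cardS' : #|S :\ i| = n by move: cardS; rewrite (cardsD1 i S) Si add1n => -[].
rewrite -(setD1K Si) (setUCA X) (setUCA Z).
apply: crossF (IHn _ cardS' disS'X rXZ); first exact: setSU.
by rewrite !inE negb_or eqxx /= (disjointFr disSX).
Qed.

End SingleCrossing.

Lemma setI_setU1_sub (T : finType) (A B : {set T}) (i : T) :
  A \subset B -> i \notin B -> B :&: (i |: A) = A.
Proof.
move=> sAB niB; rewrite setIUr (setIidPr sAB).
suff -> : B :&: [set i] = set0 by rewrite set0U.
by apply/setP => x; rewrite !inE andbC; case: eqP => // ->; rewrite (negbTE niB).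
Qed.

Lemma setU_setU1_sub (T : finType) (A B : {set T}) (i : T) :
  A \subset B -> B :|: (i |: A) = i |: B.
Proof. by move=> sAB; rewrite setUCA (setUidPl sAB). Qed.

Lemma setU_setDl (T : finType) (X Y : {set T}) : X :|: (Y :\: X) = X :|: Y.
Proof. by apply/setP => x; rewrite !inE; case: (x \in X). Qed.

Lemma quasi_submodular_for_crossing (T : finType) (R : Type)
    (F : {set T} -> R) (r : rel R) :
  single_crossing_for F r ->
  forall X Y : {set T}, r (F X) (F (X :&: Y)) -> r (F (X :|: Y)) (F Y).
Proof.
move=> crossF X Y rXY.
have disYX : [disjoint Y :\: X & X] by rewrite disjoints_subset subsetDr.
have := crossing_setU crossF (subsetIl X Y) disYX rXY.
by rewrite setU_setDl setIC setID.
Qed.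

Lemma crossing_quasi_submodular_for (T : finType) (R : Type)
    (F : {set T} -> R) (r : rel R) :
  (forall X Y : {set T}, r (F X) (F (X :&: Y)) -> r (F (X :|: Y)) (F Y)) ->
  single_crossing_for F r.
Proof.
move=> qsF A B i sAB niB.
by have := qsF B (i |: A); rewrite setI_setU1_sub // setU_setU1_sub.
Qed.

Theorem proposition2 (R : realFieldType) (N : finType) (F : {set N} -> R) :
  quasi_submodular F <-> single_sub_crossing F.
Proof.
split=> [qsF | scF].
- have le_cross := crossing_quasi_submodular_for (r := <=%R) (fun X Y => (qsF X Y).1).
  have lt_cross := crossing_quasi_submodular_for (r := <%R) (fun X Y => (qsF X Y).2).
  by move=> A B i sAB niB; split; [apply: le_cross | apply: lt_cross].
- have le_qs := quasi_submodular_for_crossing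
    (r := <=%R) (fun A B i sAB niB => (scF A B i sAB niB).1).
  have lt_qs := quasi_submodular_for_crossing
    (r := <%R) (fun A B i sAB niB => (scF A B i sAB niB).2).
  by move=> X Y; split; [apply: le_qs | apply: lt_qs].
Qed.
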